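(* Let $(R,\mathfrak m)$ be a Cohen–Macaulay local ring with $\dim R=1$. (1) Let $I$ and $J$ be $\mathfrak m$-primary ideals of $R$ and suppose that $I$ contains an element $a$ such that $Q=(a)$ is a reduction of $I$. If $I\subseteq J\subseteq\overline I$, then $\mathrm e_1(I)\le\mathrm e_1(J)$. (2) Suppose $R$ is not a discrete valuation ring. Then $\mathrm e_1(Q:_R\mathfrak m)=\mathrm r(R)$ for every parameter ideal $Q=(a)$ of $R$.
   Context: $\overline I$ denotes the integral closure of the ideal $I$; $Q$ is a reduction of $I$ if $I^{r+1}=QI^r$ for some $r\ge0$; $Q:_R\mathfrak m=\{x\in R\mid x\mathfrak m\subseteq Q\}$. For an $\mathfrak m$-primary ideal $J$, $\mathrm e_1(J)$ is defined by $\ell_R(R/J^{n+1})=\mathrm e_0(J)\binom{n+1}{1}-\mathrm e_1(J)$ for $n\gg0$; $\mathrm r(R)=\ell_R(\mathrm{Ext}^1_R(R/\mathfrak m,R))$ is the Cohen–Macaulay type. *)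

From mathcomp Require Import all_boot all_order all_algebra.
Set Implicit Arguments. Unset Strict Implicit. Unset Printing Implicit Defensive.
Import Order.TTheory GRing.Theory Num.Theory.
Local Open Scope ring_scope.

Section CommAlg.
Variable R : comNzRingType.

Definition submod (V : lmodType R) (S : V -> Prop) : Prop :=
  [/\ S 0, (forall x y, S x -> S y -> S (x + y)) & (forall (a : R) x, S x -> S (a *: x))].

Definition psubset (T : Type) (A B : T -> Prop) := forall x, A x -> B x.
Definition peq (T : Type) (A B : T -> Prop) := forall x, A x <-> B x.
Definition pstrict (T : Type) (A B : T -> Prop) := psubset A B /\ exists x, B x /\ ~ A x.

Definition submod_chain (V : lmodType R) (N M : V -> Prop) (f : nat -> V -> Prop) (k : nat) :=
  [/\ peq (f 0%N) N, peq (f k) M,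
      (forall i, (i <= k)%N -> submod (f i)) &
      (forall i, (i < k)%N -> pstrict (f i) (f i.+1))].

(* the R-module M/N has length l: the supremum of lengths of chains of
   submodules between N and M is attained and equals l *)
Definition qlength_is (V : lmodType R) (N M : V -> Prop) (l : nat) :=
  (exists f, submod_chain N M f l) /\ (forall f k, submod_chain N M f k -> (k <= l)%N).

Definition is_ideal (I : R -> Prop) := @submod (R^o) I.
Definition unitideal : R -> Prop := fun _ => True.

Definition gen (s : seq R) : R -> Prop :=
  fun x => exists c : 'I_(size s) -> R, x = \sum_(i < size s) c i * s`_i.
Definition principal (a : R) : R -> Prop := fun x => exists r, x = r * a.

Definition iprod (I J : R -> Prop) : R -> Prop :=
  fun x => exists k (a b : 'I_k -> R),
    (forall i, I (a i) /\ J (b i)) /\ x = \sum_(i < k) a i * b i.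
Fixpoint ipow (I : R -> Prop) (n : nat) : R -> Prop :=
  match n with 0%N => unitideal | n'.+1 => iprod I (ipow I n') end.

Definition colon (Q I : R -> Prop) : R -> Prop := fun x => forall y, I y -> Q (x * y).
Definition radical (I : R -> Prop) : R -> Prop := fun x => exists n, I (x ^+ n).

Definition is_prime (P : R -> Prop) :=
  is_ideal P /\ ~ P 1 /\ (forall x y, P (x * y) -> P x \/ P y).
Definition is_primary (I : R -> Prop) :=
  is_ideal I /\ ~ I 1 /\ (forall x y, I (x * y) -> ~ I x -> radical I y).

Definition noetherian := forall I, is_ideal I -> exists s, peq I (gen s).
Definition local_with (m : R -> Prop) :=
  is_ideal m /\ ~ m 1 /\ (forall I, is_ideal I -> ~ I 1 -> psubset I m).

Definition prime_chain (f : nat -> R -> Prop) (k : nat) :=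
  (forall i, (i <= k)%N -> is_prime (f i)) /\ (forall i, (i < k)%N -> pstrict (f i) (f i.+1)).
Definition krull_dim_is (d : nat) :=
  (exists f, prime_chain f d) /\ (forall f k, prime_chain f k -> (k <= d)%N).

Definition regular_seq (m : R -> Prop) (s : seq R) :=
  [/\ (forall x, x \in s -> m x),
      (forall i, (i < size s)%N -> forall y, gen (take i s) (s`_i * y) -> gen (take i s) y)
    & ~ gen s 1].
Definition depth_is (m : R -> Prop) (d : nat) :=
  (exists s, size s = d /\ regular_seq m s) /\ (forall s, regular_seq m s -> (size s <= d)%N).

Definition cohen_macaulay (m : R -> Prop) :=
  exists d, krull_dim_is d /\ depth_is m d.

Definition m_primary (m I : R -> Prop) := is_primary I /\ peq (radical I) m.

Definition reduction (Q I : R -> Prop) :=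
  psubset Q I /\ exists r, peq (ipow I r.+1) (iprod Q (ipow I r)).

Definition int_closure (I : R -> Prop) : R -> Prop :=
  fun x => exists (n : nat) (c : nat -> R), (0 < n)%N /\
    (forall i, (1 <= i <= n)%N -> ipow I i (c i)) /\
    x ^+ n + \sum_(1 <= i < n.+1) c i * x ^+ (n - i) = 0.

Definition colength_is (J : R -> Prop) (l : nat) := @qlength_is (R^o) J unitideal l.

Definition e1_is (J : R -> Prop) (e : int) :=
  exists (e0 : int) (N : nat), forall n, (N <= n)%N ->
    exists l, colength_is (ipow J n.+1) l /\ (l%:Z = e0 * (n.+1)%:Z - e).

(* Ext^1_R(R/m, R), computed from the free presentation
     ... -> F_2 -> R^k --(x_1..x_k)--> R -> R/m -> 0
   where m = (x_1,...,x_k) and F_2 maps onto the syzygies of (x_i):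
   Ext^1 = Z/B with Z = {y in R^k | sum c_i y_i = 0 for all syzygies c}
   (= Hom(R^k,R) functionals killing the syzygies) and
   B = {(r x_1, ..., r x_k)} (image of Hom(R,R)). *)
Definition ext1_cycles (xs : seq R) : 'rV[R]_(size xs) -> Prop :=
  fun y => forall c : 'rV[R]_(size xs),
    \sum_(i < size xs) c 0 i * xs`_i = 0 -> \sum_(i < size xs) c 0 i * y 0 i = 0.
Definition ext1_bounds (xs : seq R) : 'rV[R]_(size xs) -> Prop :=
  fun y => exists r : R, forall i : 'I_(size xs), y 0 i = r * xs`_i.

(* Cohen-Macaulay type r(R) = l_R(Ext^1_R(R/m,R)) computed with generators xs of m *)
Definition cm_type_is (xs : seq R) (t : nat) :=
  @qlength_is _ (@ext1_bounds xs) (@ext1_cycles xs) t.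

Definition is_dvr :=
  (forall x y : R, x * y = 0 -> x = 0 \/ y = 0) /\
  (forall I, is_ideal I -> exists a, peq I (principal a)) /\
  (exists x : R, x != 0 /\ ~ (exists y, x * y = 1)).

End CommAlg.

From mathcomp Require Import all_boot all_order all_algebra.
From Stdlib Require Import Classical ClassicalEpsilon.
From mathcomp Require Import zify ring.
Import Order.TTheory GRing.Theory Num.Theory.
Set Implicit Arguments. Unset Strict Implicit. Unset Printing Implicit Defensive.
Local Open Scope ring_scope.

(* (1) If J is integral over I, adjoining the finitely many generators of J one
   at a time keeps I a reduction, so J^(c+n) <= I^n for some c.  Comparing
   l(R/I^(n+1)) with l(R/J^(n+1)) and l(R/J^(c+n+1)) forces e_0(I) = e_0(J) and
   then e_1(I) <= e_1(J).
   (2) Since depth R = 1 there is a non-zerodivisor, so the parameter a is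
   regular; since R is not a DVR, m is not principal.  For K = (a) : m this
   gives K m <= a m, hence K^2 = aK and K^(n+1) = a^n K, so
   l(R/K^(n+1)) = n l(R/(a)) + l(R/K) and e_1(K) = l(K/(a)).  Finally
   K/(a) = Hom(R/m, R/(a)) = Ext^1(R/m, R), whose length is r(R). *)

Lemma ex_maxn_bounded (P : nat -> Prop) L : (exists k, P k) -> (forall k, P k -> (k <= L)%N) ->
  exists n, P n /\ forall k, P k -> (k <= n)%N.
Proof.
elim: L P => [|L IH] P [k hk] hb.
  by exists k; split => // k' /hb; rewrite leqn0 => /eqP ->.
case: (classic (P L.+1)) => h; first by exists L.+1.
apply: IH; first by exists k.
by move=> k' hk'; have := hb _ hk'; rewrite leq_eqVlt => /orP [/eqP e|] //; subst k'.
Qed.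

Lemma ex_minn_classic (P : nat -> Prop) : (exists n, P n) ->
  exists n, P n /\ forall k, (k < n)%N -> ~ P k.
Proof.
move=> [n hn]; elim: n {-2}n (leqnn n) hn => [|N IH] n hn hP.
  by exists n; split => // k; rewrite leqn0 in hn; rewrite (eqP hn).
case: (classic (exists k, (k < n)%N /\ P k)) => [[k [hk hPk]]|hno].
  by apply: (IH k) => //; rewrite -ltnS; apply: leq_trans hn.
by exists n; split => // k hk hPk; apply: hno; exists k.
Qed.

Section Lengths.
Variables (R : comNzRingType) (V : lmodType R).
Implicit Types A B C X Y Z : V -> Prop.

Lemma pstrict_peq X Y X' Y' : pstrict X Y -> peq X X' -> peq Y Y' -> pstrict X' Y'.
Proof.
move=> [s [x [Yx nXx]]] e1 e2; split; first by move=> z /e1 /s /e2.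
by exists x; split; [apply/e2 | move=> /e1].
Qed.

Lemma submod_chain_peq X Y X' Y' f k : submod_chain X Y f k -> peq X X' -> peq Y Y' ->
  submod_chain X' Y' f k.
Proof.
move=> [h0 hk hs hst] e1 e2; split=> // z.
  by split=> [/h0/e1|/e1/h0].
by split=> [/hk/e2|/e2/hk].
Qed.

Lemma submod_chain_sub X Y f k : submod_chain X Y f k ->
  forall i, (i <= k)%N -> psubset (f i) Y.
Proof.
move=> [_ hk _ hst].
suff H d i : (i + d = k)%N -> psubset (f i) Y.
  by move=> i hi; apply: (H (k - i)%N); rewrite subnKC.
elim: d i => [|d IH] i hid; first by rewrite addn0 in hid; subst; move=> z /hk.
have [s _] : pstrict (f i) (f i.+1) by apply: hst; rewrite -hid addnS ltnS leq_addr.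
by move=> z /s; apply: IH; rewrite addSnnS.
Qed.

Lemma submodN X x : submod X -> X x -> X (- x).
Proof. by move=> [_ _ hZ] hx; rewrite -scaleN1r; apply: hZ. Qed.

Lemma submodB X x y : submod X -> X x -> X y -> X (x - y).
Proof. by move=> hX hx hy; have [_ hD _] := hX; apply: hD => //; apply: submodN. Qed.

Definition pcap X Y : V -> Prop := fun x => X x /\ Y x.
Definition padd X Y : V -> Prop := fun x => exists p q, X p /\ Y q /\ x = p + q.

Lemma pcap_submod X Y : submod X -> submod Y -> submod (pcap X Y).
Proof.
move=> [x0 xD xZ] [y0 yD yZ]; split; first by split.
  by move=> x y [? ?] [? ?]; split; auto.
by move=> a x [? ?]; split; auto.
Qed.

Lemma padd_submod X Y : submod X -> submod Y -> submod (padd X Y).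
Proof.
move=> [x0 xD xZ] [y0 yD yZ]; split.
- by exists 0, 0; rewrite addr0.
- move=> x y [p [q [hp [hq ->]]]] [p' [q' [hp' [hq' ->]]]].
  by exists (p + p'), (q + q'); do 2?split; auto; rewrite addrACA.
- move=> a x [p [q [hp [hq ->]]]]; exists (a *: p), (a *: q).
  by do 2?split; auto; rewrite scalerDr.
Qed.

Lemma submod_chain_rcons X Y Z f k : submod_chain X Y f k -> pstrict Y Z -> submod Z ->
  submod_chain X Z (fun i => if (i <= k)%N then f i else Z) k.+1.
Proof.
move=> [h0 hk hs hst] hYZ hZ; split => /=; rewrite ?ltnn //.
- by move=> i hi; case: ifP => // /hs.
- move=> i; rewrite ltnS => hi; rewrite hi.
  case: (ltnP i k) => hik; first exact: hst.
  have -> : i = k by apply/eqP; rewrite eqn_leq hi hik.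
  by apply: pstrict_peq hYZ _ _ => // z; split => /hk.
Qed.

Lemma submod_chain_cat X Y Z f g k1 k2 : submod_chain X Y f k1 -> submod_chain Y Z g k2 ->
  submod_chain X Z (fun i => if (i <= k1)%N then f i else g (i - k1)%N) (k1 + k2).
Proof.
move=> [f0 fk fs fst] [g0 gk gs gst]; split => /=.
- by [].
- case: ifP => h; last by rewrite addKn.
  have k20 : k2 = 0%N by move: h; rewrite -{2}(addn0 k1) leq_add2l leqn0 => /eqP.
  by subst k2; rewrite addn0 => z; split => [/fk/g0/gk|/gk/g0/fk].
- move=> i hi; case: ifP => h; first exact: fs.
  by apply: gs; rewrite leq_subLR.
- move=> i hi; case: (ltnP i k1) => hik; first by rewrite (ltnW hik); apply: fst.
  case: (leqP i k1) => h2; last first.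
    by rewrite subSn ?(ltnW h2) //; apply: gst; rewrite ltn_subLR // ltnW.
  have ei : i = k1 by apply/eqP; rewrite eqn_leq h2 hik.
  subst i; rewrite subSnn.
  have H : pstrict (g 0%N) (g 1%N) by apply: gst; rewrite -(ltn_add2l k1) addn0.
  by apply: pstrict_peq H _ _ => // z; split => [/g0/fk|/fk/g0].
Qed.

Lemma submod_chain_exists X Y : submod X -> submod Y -> psubset X Y ->
  exists k f, submod_chain X Y f k.
Proof.
move=> hX hY hXY; case: (classic (exists x, Y x /\ ~ X x)) => [hx|hn].
  exists 1%N, (fun i => if i == 0%N then X else Y); split => //=.
  - by move=> [|[|i]].
  - by move=> [|i] //= _; split.
exists 0%N, (fun _ => X); split => // z; split; first exact: hXY.
by move=> hz; apply: NNPP => hz'; apply: hn; exists z.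
Qed.

Lemma qlength_unique X Y l l' : qlength_is X Y l -> qlength_is X Y l' -> l = l'.
Proof.
move=> [[f hf] b] [[f' hf'] b']; apply/eqP.
by rewrite eqn_leq (b' _ _ hf) (b _ _ hf').
Qed.

Lemma qlength_peq X Y X' Y' l : peq X X' -> peq Y Y' -> qlength_is X Y l -> qlength_is X' Y' l.
Proof.
move=> e1 e2 [[f hf] b]; split; first by exists f; apply: submod_chain_peq hf _ _.
move=> g k hg; apply: (b g k); apply: submod_chain_peq hg _ _ => z.
  by split => /e1.
by split => /e2.
Qed.

(* If both were equalities, the modular law would give X = Y. *)
Lemma pstrict_pcap_or_padd B X Y : submod B -> submod X -> submod Y ->
  pstrict X Y -> pstrict (pcap X B) (pcap Y B) \/ pstrict (padd X B) (padd Y B).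
Proof.
move=> hB hX hY [sXY [x [Yx nXx]]].
case: (classic (exists z, pcap Y B z /\ ~ pcap X B z)) => [[z hz]|hn].
  left; split; last by exists z.
  by move=> w [hw1 hw2]; split => //; apply: sXY.
right; split.
  by move=> w [p [b [hp [hb ->]]]]; exists p, b; split; [exact: sXY | split].
exists x; split.
  by exists x, 0; split => //; split; [case: hB | rewrite addr0].
move=> [p [b [hp [hb ex]]]].
have hbY : Y b.
  have -> : b = x - p by rewrite ex addrAC subrr add0r.
  by apply: submodB => //; apply: sXY.
have [hbX _] : pcap X B b by apply: NNPP => nb; apply: hn; exists b.
by apply: nXx; rewrite ex; case: hX => _ hD _; exact: hD.
Qed.

Lemma submod_chain_grow X Y Z f k : submod_chain X Y f k -> psubset Y Z -> submod Z ->
  exists k' f', [/\ (k <= k')%N, submod_chain X Z f' k' & (pstrict Y Z -> (k < k')%N)].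
Proof.
move=> hf sYZ hZ; case: (classic (pstrict Y Z)) => hs.
  by exists k.+1, (fun i => if (i <= k)%N then f i else Z); split;
    [exact: leqnSn | exact: submod_chain_rcons hf hs hZ | by []].
exists k, f; split => //; apply: submod_chain_peq hf _ _ => // z; split; first exact: sYZ.
by move=> hz; apply: NNPP => nz; apply: hs; split => //; exists z.
Qed.

Lemma submod_chain_split B g k : submod B -> (forall i, (i <= k)%N -> submod (g i)) ->
  (forall i, (i < k)%N -> pstrict (g i) (g i.+1)) ->
  exists k1 k2 u v, [/\ (k <= k1 + k2)%N,
    submod_chain (pcap (g 0%N) B) (pcap (g k) B) u k1 &
    submod_chain (padd (g 0%N) B) (padd (g k) B) v k2].
Proof.
move=> hB; elim: k => [|k IH] hs hst.
  exists 0%N, 0%N, (fun _ => pcap (g 0%N) B), (fun _ => padd (g 0%N) B).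
  split => //; split => // i _; [apply: pcap_submod | apply: padd_submod] => //; exact: hs.
have [k1 [k2 [u [v [hk hu hv]]]]] := IH (fun i hi => hs i (leqW hi)) (fun i hi => hst i (ltnW hi)).
have hgk : submod (g k) by apply: hs; apply: leqnSn.
have hgk1 : submod (g k.+1) by apply: hs.
have [sk _] := hst k (ltnSn k).
have sc : psubset (pcap (g k) B) (pcap (g k.+1) B) by move=> z [? ?]; split => //; apply: sk.
have sa : psubset (padd (g k) B) (padd (g k.+1) B).
  by move=> z [p [b [hp [hb ->]]]]; exists p, b; split; [apply: sk|split].
have [k1' [u' [l1 hu' s1]]] := submod_chain_grow hu sc (pcap_submod hgk1 hB).
have [k2' [v' [l2 hv' s2]]] := submod_chain_grow hv sa (padd_submod hgk1 hB).
exists k1', k2', u', v'; split => //.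
case: (pstrict_pcap_or_padd hB hgk hgk1 (hst k (ltnSn k))) => [/s1|/s2] h.
  by apply: (leq_trans _ (leq_add h l2)); rewrite addSn ltnS.
by apply: (leq_trans _ (leq_add l1 h)); rewrite addnS ltnS.
Qed.

Section Additivity.
Variables A B C : V -> Prop.
Hypotheses (hA : submod A) (hB : submod B) (hC : submod C).
Hypotheses (sAB : psubset A B) (sBC : psubset B C).

Lemma submod_chain_le_add l1 l2 :
  (forall f k, submod_chain A B f k -> (k <= l1)%N) ->
  (forall f k, submod_chain B C f k -> (k <= l2)%N) ->
  forall g k, submod_chain A C g k -> (k <= l1 + l2)%N.
Proof.
move=> b1 b2 g k [h0 hk hs hst].
have [k1 [k2 [u [v [hk' hu hv]]]]] := submod_chain_split hB hs hst.
apply: leq_trans hk' (leq_add (b1 u k1 _) (b2 v k2 _)).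
  apply: submod_chain_peq hu _ _ => z; split.
  - by move=> [/h0].
  - by move=> hz; split; [apply/h0 | apply: sAB].
  - by case.
  - by move=> hz; split => //; apply/hk; apply: sBC.
have [_ hBD _] := hB; have [_ hCD _] := hC.
apply: submod_chain_peq hv _ _ => z; split.
- by move=> [p [q [/h0 hp [hq ->]]]]; apply: hBD => //; exact: sAB.
- by move=> hz; exists 0, z; split; [apply/h0; case: hA | split; rewrite ?add0r].
- by move=> [p [q [/hk hp [hq ->]]]]; apply: hCD => //; exact: sBC.
- by move=> hz; exists z, 0; split; [apply/hk | split; [case: hB | rewrite addr0]].
Qed.

Lemma qlength_cat l1 l2 : qlength_is A B l1 -> qlength_is B C l2 -> qlength_is A C (l1 + l2).
Proof.
move=> [[f1 hf1] b1] [[f2 hf2] b2]; split; first by eexists; exact: submod_chain_cat hf1 hf2.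
exact: submod_chain_le_add.
Qed.

Lemma qlength_split l : qlength_is A C l ->
  exists l1 l2, [/\ qlength_is A B l1, qlength_is B C l2 & (l1 + l2)%N = l].
Proof.
move=> [[g hg] hb].
have [k1 [g1 hg1]] := submod_chain_exists hA hB sAB.
have [k2 [g2 hg2]] := submod_chain_exists hB hC sBC.
have [l1 [[f1 hf1] hm1]] : exists l1, (exists f, submod_chain A B f l1) /\
    forall k, (exists f, submod_chain A B f k) -> (k <= l1)%N.
  apply: (@ex_maxn_bounded _ l); first by exists k1, g1.
  by move=> k [f hf]; apply: leq_trans (hb _ _ (submod_chain_cat hf hg2)); exact: leq_addr.
have [l2 [[f2 hf2] hm2]] : exists l2, (exists f, submod_chain B C f l2) /\
    forall k, (exists f, submod_chain B C f k) -> (k <= l2)%N.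
  apply: (@ex_maxn_bounded _ l); first by exists k2, g2.
  by move=> k [f hf]; apply: leq_trans (hb _ _ (submod_chain_cat hg1 hf)); exact: leq_addl.
have h1 : qlength_is A B l1 by split => [|f k hf]; [exists f1 | apply: hm1; exists f].
have h2 : qlength_is B C l2 by split => [|f k hf]; [exists f2 | apply: hm2; exists f].
exists l1, l2; split => //.
by apply: qlength_unique (qlength_cat h1 h2) _; split => //; exists g.
Qed.

End Additivity.
End Lengths.

Section Transport.
Variables (R : comNzRingType) (V W : lmodType R) (f : V -> W).
Hypothesis fD : forall x y, f (x + y) = f x + f y.
Hypothesis fZ : forall (a : R) x, f (a *: x) = a *: f x.
Variables (A B : V -> Prop) (A' B' : W -> Prop).
Hypotheses (hB : submod B) (sAB : psubset A B) (sAB' : psubset A' B').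
Hypothesis f_inj : forall x y, B x -> B y -> f x = f y -> x = y.
Hypothesis f_onto : forall w, B' w -> exists x, B x /\ f x = w.
Hypothesis f_img : forall x, B x -> B' (f x).
Hypothesis f_pre : forall x, B x -> (A x <-> A' (f x)).

Let f0 : f 0 = 0.
Proof. by rewrite -(scale0r 0) fZ scale0r. Qed.

Let push_chain g k : submod_chain A B g k ->
  submod_chain A' B' (fun i w => exists x, g i x /\ w = f x) k.
Proof.
move=> hg; have hsub := submod_chain_sub hg; case: hg => [h0 hk hs hst]; split.
- move=> w; split; first by move=> [x [/h0 hx ->]]; apply/f_pre => //; apply: sAB.
  move=> hw; have [x [hx ex]] := f_onto (sAB' hw).
  by exists x; split => //; apply/h0; apply/f_pre => //; rewrite ex.
- move=> w; split; first by move=> [x [/hk hx ->]]; apply: f_img.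
  by move=> /f_onto [x [hx ex]]; exists x; split => //; apply/hk.
- move=> i hi; have [s0 sD sZ] := hs i hi; split.
  + by exists 0; rewrite f0.
  + by move=> x y [x' [hx ->]] [y' [hy ->]]; exists (x' + y'); split; auto.
  + by move=> a x [x' [hx ->]]; exists (a *: x'); split; auto.
- move=> i hi; have [s [x [hx nx]]] := hst i hi; split.
    by move=> w [y [hy ->]]; exists y; split => //; apply: s.
  exists (f x); split; first by exists x.
  move=> [y [hy e]]; apply: nx.
  by rewrite (f_inj (hsub i.+1 hi x hx) (hsub i (ltnW hi) y hy) e).
Qed.

Let pull_chain h k : submod_chain A' B' h k ->
  submod_chain A B (fun i x => B x /\ h i (f x)) k.
Proof.
move=> hh; have hsub := submod_chain_sub hh; case: hh => [h0 hk hs hst]; split.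
- move=> x; split; first by move=> [bx /h0 /(f_pre bx)].
  by move=> ax; have bx := sAB ax; split => //; apply/h0/(f_pre bx).
- move=> x; split; first by case.
  by move=> bx; split => //; apply/hk; apply: f_img.
- move=> i hi; have [s0 sD sZ] := hs i hi; have [b0 bD bZ] := hB; split.
  + by split => //; rewrite f0.
  + by move=> x y [? ?] [? ?]; split; [auto | rewrite fD; auto].
  + by move=> a x [? ?]; split; [auto | rewrite fZ; auto].
- move=> i hi; have [s [w [hw nw]]] := hst i hi; split.
    by move=> x [bx hx]; split => //; apply: s.
  have [x [bx ex]] := f_onto (hsub i.+1 hi w hw).
  by exists x; split; [split; rewrite ?ex | rewrite ex; case].
Qed.

Lemma qlength_transport l : qlength_is A B l <-> qlength_is A' B' l.
Proof.
split=> [[[g hg] hb]|[[h hh] hb]].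
  by split=> [|h k hh]; [eexists; exact: push_chain hg | exact: hb _ _ (pull_chain hh)].
by split=> [|g k hg]; [eexists; exact: pull_chain hh | exact: hb _ _ (push_chain hg)].
Qed.

End Transport.

Section Ideals.
Variable R : comNzRingType.
Implicit Types (I J K A B C : R -> Prop) (a c x : R).

Lemma idealP I : is_ideal I <->
  [/\ I 0, (forall x y, I x -> I y -> I (x + y)) & (forall a x, I x -> I (a * x))].
Proof. by split; case. Qed.

Lemma ideal0 I : is_ideal I -> I 0.
Proof. by case/idealP. Qed.

Lemma idealD I x y : is_ideal I -> I x -> I y -> I (x + y).
Proof. by case/idealP => _ h _; apply: h. Qed.

Lemma ideal_mull I a x : is_ideal I -> I x -> I (a * x).
Proof. by case/idealP => _ _ h; apply: h. Qed.

Lemma ideal_mulr I a x : is_ideal I -> I x -> I (x * a).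
Proof. by move=> hI hx; rewrite mulrC; apply: ideal_mull. Qed.

Lemma idealN I x : is_ideal I -> I x -> I (- x).
Proof. by move=> hI hx; rewrite -mulN1r; apply: ideal_mull. Qed.

Lemma ideal_sum I (T : Type) (r : seq T) (P : pred T) (F : T -> R) :
  is_ideal I -> (forall i, P i -> I (F i)) -> I (\sum_(i <- r | P i) F i).
Proof. by move=> hI hF; apply: big_ind => //; [exact: ideal0 | move=> x y; apply: idealD]. Qed.

Lemma ideal_peq I J : is_ideal I -> peq I J -> is_ideal J.
Proof.
move=> /idealP [h0 hD hM] e; apply/idealP; split; first by apply/e.
  by move=> x y /e hx /e hy; apply/e; auto.
by move=> a x /e hx; apply/e; auto.
Qed.

Lemma unitideal_ideal : @is_ideal R (@unitideal R).
Proof. by apply/idealP. Qed.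

Lemma principal_ideal a : is_ideal (principal a).
Proof.
apply/idealP; split; first by exists 0; rewrite mul0r.
  by move=> x y [r ->] [s ->]; exists (r + s); rewrite mulrDl.
by move=> b x [r ->]; exists (b * r); rewrite mulrA.
Qed.

Lemma principal_id a : principal a a.
Proof. by exists 1; rewrite mul1r. Qed.

Lemma gen_nth (s : seq R) i : (i < size s)%N -> gen s s`_i.
Proof.
move=> hi; exists (fun j : 'I_(size s) => (j == Ordinal hi)%:R).
rewrite (bigD1 (Ordinal hi)) //= eqxx mul1r big1 ?addr0 //.
by move=> j /negbTE ->; rewrite mul0r.
Qed.

Lemma gen_nil (w : R) : gen [::] w <-> w = 0.
Proof.
split; first by move=> [c ->]; rewrite big_ord0.
by move=> ->; exists (fun _ => 0); rewrite big_ord0.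
Qed.

Lemma gen_sub I (s : seq R) : is_ideal I -> (forall i, (i < size s)%N -> I s`_i) ->
  psubset (gen s) I.
Proof.
by move=> hI hs x [d ->]; apply: ideal_sum => // i _; apply: ideal_mull => //; apply: hs.
Qed.

Lemma colon_ideal Q I : is_ideal Q -> is_ideal (colon Q I).
Proof.
move=> hQ; apply/idealP; split.
- by move=> y _; rewrite mul0r; exact: ideal0.
- by move=> u v hu hv y hy; rewrite mulrDl; apply: idealD; auto.
- by move=> b u hu y hy; rewrite -mulrA; apply: ideal_mull; auto.
Qed.

Lemma sub_colon Q I : is_ideal Q -> psubset Q (colon Q I).
Proof. by move=> hQ u hu y _; apply: ideal_mulr. Qed.

Lemma ideal_preim_mulr K c : is_ideal K -> is_ideal (fun x => K (x * c)).
Proof.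
move=> hK; apply/idealP; split; first by rewrite mul0r; apply: ideal0.
  by move=> x y hx hy; rewrite mulrDl; apply: idealD.
by move=> a x hx; rewrite -mulrA; apply: ideal_mull.
Qed.

Lemma ideal_preim_mull K c : is_ideal K -> is_ideal (fun x => K (c * x)).
Proof. by move=> hK; apply: ideal_peq (ideal_preim_mulr c hK) _ => x; rewrite mulrC. Qed.

Definition mulset c P : R -> Prop := fun w => exists z, P z /\ w = c * z.

Lemma mulset_ideal c I : is_ideal I -> is_ideal (mulset c I).
Proof.
move=> hI; apply/idealP; split; first by exists 0; rewrite mulr0; split => //; apply: ideal0.
  move=> u v [z [hz ->]] [z' [hz' ->]]; exists (z + z').
  by split; [apply: idealD | rewrite mulrDr].
move=> b u [z [hz ->]]; exists (b * z).
by split; [apply: ideal_mull | rewrite mulrCA].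
Qed.

Lemma iprod_mem A B a b : A a -> B b -> iprod A B (a * b).
Proof. by move=> ha hb; exists 1%N, (fun _ => a), (fun _ => b); rewrite big_ord1. Qed.

Lemma iprod_ideal A B : is_ideal A -> is_ideal (iprod A B).
Proof.
move=> hA; apply/idealP; split.
- by exists 0%N, (fun _ => 0), (fun _ => 0); split => [[]|]; rewrite ?big_ord0.
- move=> x y [k1 [a1 [b1 [h1 ->]]]] [k2 [a2 [b2 [h2 ->]]]].
  exists (k1 + k2)%N,
    (fun i => match split i with inl j => a1 j | inr j => a2 j end),
    (fun i => match split i with inl j => b1 j | inr j => b2 j end).
  split; first by move=> i; case: (split i) => j.
  rewrite big_split_ord /=; congr (_ + _); apply: eq_bigr => j _.
    by rewrite (unsplitK (inl _ j)).
  by rewrite (unsplitK (inr _ j)).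
- move=> r x [k [a [b [h ->]]]]; exists k, (fun i => r * a i), b; split.
    by move=> i; have [ha hb] := h i; split => //; apply: ideal_mull.
  by rewrite mulr_sumr; apply: eq_bigr => i _; rewrite mulrA.
Qed.

Lemma iprod_least A B K : is_ideal K -> (forall a b, A a -> B b -> K (a * b)) ->
  psubset (iprod A B) K.
Proof.
move=> hK h x [k [a [b [hab ->]]]]; apply: ideal_sum => // i _.
by have [] := hab i; apply: h.
Qed.

Lemma iprodS A B A' B' : is_ideal A' -> psubset A A' -> psubset B B' ->
  psubset (iprod A B) (iprod A' B').
Proof.
move=> hA' sA sB; apply: iprod_least; first exact: iprod_ideal.
by move=> a b ha hb; apply: iprod_mem; [apply: sA | apply: sB].
Qed.

Lemma iprodSr A B B' : is_ideal A -> psubset B B' -> psubset (iprod A B) (iprod A B').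
Proof. by move=> hA; apply: iprodS. Qed.

Lemma iprodC A B : is_ideal B -> psubset (iprod A B) (iprod B A).
Proof.
move=> hB; apply: iprod_least; first exact: iprod_ideal.
by move=> a b ha hb; rewrite mulrC; apply: iprod_mem.
Qed.

Lemma iprodA A B C : is_ideal A -> is_ideal B ->
  psubset (iprod (iprod A B) C) (iprod A (iprod B C)).
Proof.
move=> hA hB; apply: iprod_least; first exact: iprod_ideal.
move=> x c hx hc.
have hK := ideal_preim_mulr c (iprod_ideal (iprod B C) hA).
apply: (iprod_least hK _ hx) => a b ha hb /=.
by rewrite -mulrA; apply: iprod_mem => //; apply: iprod_mem.
Qed.

Lemma iprodA' A B C : is_ideal A -> is_ideal B ->
  psubset (iprod A (iprod B C)) (iprod (iprod A B) C).
Proof.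
move=> hA hB; apply: iprod_least; first by apply: iprod_ideal; apply: iprod_ideal.
move=> a y ha hy.
have hK := ideal_preim_mull a (iprod_ideal C (iprod_ideal B hA)).
apply: (iprod_least hK _ hy) => b c hb hc /=.
by rewrite mulrA; apply: iprod_mem => //; apply: iprod_mem.
Qed.

Lemma iprodCA A B C : is_ideal A -> is_ideal B ->
  psubset (iprod A (iprod B C)) (iprod B (iprod A C)).
Proof.
move=> hA hB x /(iprodA' hA hB) hx; apply: (iprodA (C:=C) hB hA).
exact: (iprodS (iprod_ideal A hB) (iprodC hB) (fun y (hy : C y) => hy) hx).
Qed.

Lemma iprod_subl A B : is_ideal A -> psubset (iprod A B) A.
Proof. by move=> hA; apply: iprod_least => // a b ha _; apply: ideal_mulr. Qed.

Lemma iprod_subr A B : is_ideal B -> psubset (iprod A B) B.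
Proof. by move=> hB; apply: iprod_least => // a b _ hb; apply: ideal_mull. Qed.

Lemma iprod1l B : psubset B (iprod (@unitideal R) B).
Proof. by move=> x hx; rewrite -(mul1r x); apply: iprod_mem. Qed.

Lemma iprod1r A : psubset A (iprod A (@unitideal R)).
Proof. by move=> x hx; rewrite -(mulr1 x); apply: iprod_mem. Qed.

Lemma ipow_ideal I n : is_ideal I -> is_ideal (ipow I n).
Proof. by case: n => [|n] hI /=; [exact: unitideal_ideal | exact: iprod_ideal]. Qed.

Lemma ipowS I J n : is_ideal J -> psubset I J -> psubset (ipow I n) (ipow J n).
Proof. by move=> hJ sIJ; elim: n => [|n IH] //=; apply: iprodS. Qed.

Lemma ipowD I p q : is_ideal I ->
  psubset (ipow I (p + q)) (iprod (ipow I p) (ipow I q)) /\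
  psubset (iprod (ipow I p) (ipow I q)) (ipow I (p + q)).
Proof.
move=> hI; elim: p => [|p [IH1 IH2]].
  by rewrite add0n; split; [exact: iprod1l | apply: iprod_subr; exact: ipow_ideal].
rewrite addSn /=; split=> x hx.
  exact (iprodA' hI (ipow_ideal p hI) (iprodSr hI IH1 hx)).
by apply: (iprodSr hI IH2); exact (iprodA hI (ipow_ideal p hI) hx).
Qed.

Lemma ipow_exp I x n : I x -> ipow I n (x ^+ n).
Proof. by move=> hx; elim: n => [|n IH] //=; rewrite exprS; apply: iprod_mem. Qed.

End Ideals.

Section Reductions.
Variable R : comNzRingType.
Implicit Types (I J K L : R -> Prop) (x : R).

Definition weak_reduction I K := exists r, psubset (ipow K r.+1) (iprod I (ipow K r)).

Lemma weak_reduction_pow I K r : is_ideal I -> is_ideal K ->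
  psubset (ipow K r.+1) (iprod I (ipow K r)) ->
  forall n, psubset (ipow K (r + n)) (iprod (ipow I n) (ipow K r)).
Proof.
move=> hI hK hr; elim=> [|n IH]; first by rewrite addn0; apply: iprod1l.
have hKn := ipow_ideal n hK.
move=> x; rewrite addnS -addSn addnC => /(ipowD n r.+1 hK).1 hx.
have {}hx := iprodCA hKn hI (iprodSr hKn hr hx).
have {}hx := iprodSr hI (ipowD n r hK).2 hx.
rewrite addnC in hx.
exact (iprodA' hI (ipow_ideal n hI) (iprodSr hI IH hx)).
Qed.

Lemma weak_reduction_ipow_sub I K : is_ideal I -> is_ideal K -> weak_reduction I K ->
  exists c, forall n, psubset (ipow K (c + n)) (ipow I n).
Proof.
move=> hI hK [r hr]; exists r => n x /(weak_reduction_pow hI hK hr).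
by apply: iprod_subl; apply: ipow_ideal.
Qed.

Lemma weak_reduction_trans I K L : is_ideal I -> is_ideal K -> is_ideal L -> psubset K L ->
  weak_reduction I K -> weak_reduction K L -> weak_reduction I L.
Proof.
move=> hI hK hL sKL [p hp] [q hq]; exists (p + q)%N => x.
rewrite -addSn addnC => /(weak_reduction_pow hK hL hq) hx.
have {}hx := iprodA hI (ipow_ideal p hK) (iprodS (iprod_ideal _ hI) hp (fun y hy => hy) hx).
apply: (iprodSr hI (ipowD p q hL).2).
exact (iprodSr hI (iprodS (ipow_ideal p hL) (ipowS hL sKL) (fun y hy => hy)) hx).
Qed.

Definition adjoin K x : R -> Prop := fun y => exists k r, K k /\ y = k + r * x.

Lemma adjoin_ideal K x : is_ideal K -> is_ideal (adjoin K x).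
Proof.
move=> hK; apply/idealP; split.
- by exists 0, 0; rewrite mul0r addr0; split => //; apply: ideal0.
- move=> y z [k [r [hk ->]]] [k' [r' [hk' ->]]]; exists (k + k'), (r + r').
  by split; [apply: idealD | rewrite mulrDl addrACA].
- move=> a y [k [r [hk ->]]]; exists (a * k), (a * r).
  by split; [apply: ideal_mull | rewrite mulrDr mulrA].
Qed.

Lemma sub_adjoin K x : psubset K (adjoin K x).
Proof. by move=> y hy; exists y, 0; rewrite mul0r addr0. Qed.

Lemma adjoin_id K x : is_ideal K -> adjoin K x x.
Proof. by move=> hK; exists 0, 1; rewrite mul1r add0r; split => //; apply: ideal0. Qed.

Section AdjoinIntegral.
Variables (K : R -> Prop) (x : R).
Hypothesis hK : is_ideal K.
Let L := adjoin K x.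
Let hL : is_ideal L := adjoin_ideal x hK.

Let M j : R -> Prop := fun y => exists u s, iprod K (ipow L j) u /\ y = u + s * x ^+ j.+1.

Let M_ideal j : is_ideal (M j).
Proof.
have hP : is_ideal (iprod K (ipow L j)) by apply: iprod_ideal.
apply/idealP; split.
- by exists 0, 0; rewrite mul0r addr0; split => //; apply: ideal0.
- move=> y z [u [r [hu ->]]] [u' [r' [hu' ->]]]; exists (u + u'), (r + r').
  by split; [apply: idealD | rewrite mulrDl addrACA].
- move=> a y [u [r [hu ->]]]; exists (a * u), (a * r).
  by split; [apply: ideal_mull | rewrite mulrDr mulrA].
Qed.

Let ipow_adjoin_sub j : psubset (ipow L j.+1) (M j).
Proof.
elim: j => [|j IH].
  apply: iprod_least; first exact: M_ideal.
  move=> l w [k [r [hk ->]]] _; exists (k * w), (r * w); split.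
    by rewrite -(mulr1 k) -mulrA; apply: iprod_mem.
  by rewrite expr1 mulrDl mulrAC.
have hxw w : ipow L j.+1 w -> M j.+1 (x * w).
  move=> /IH [u [s [hu ->]]]; exists (x * u), s; split; last first.
    by rewrite mulrDr mulrCA -exprS.
  have hQ := ideal_preim_mull x (iprod_ideal (ipow L j.+1) hK).
  apply: (iprod_least hQ _ hu) => k v hk hv /=.
  by rewrite mulrCA; apply: iprod_mem => //=; apply: iprod_mem => //; apply: adjoin_id.
apply: iprod_least; first exact: M_ideal.
move=> l w [k [r [hk ->]]] hw; rewrite mulrDl; apply: idealD; first exact: M_ideal.
  by exists (k * w), 0; rewrite mul0r addr0; split => //; exact: iprod_mem.
by rewrite -mulrA; apply: ideal_mull; [exact: M_ideal | exact: hxw].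
Qed.

(* An equation of integral dependence x^n + c_1 x^(n-1) + ... + c_n = 0 with
   c_i in K^i puts x^n in K L^(n-1). *)
Lemma weak_reduction_adjoin n (c : nat -> R) : (0 < n)%N ->
  (forall i, (1 <= i <= n)%N -> ipow K i (c i)) ->
  x ^+ n + \sum_(1 <= i < n.+1) c i * x ^+ (n - i) = 0 -> weak_reduction K L.
Proof.
move=> n0 hc eq; exists n.-1.
have hT : is_ideal (iprod K (ipow L n.-1)) by apply: iprod_ideal.
have hxn : iprod K (ipow L n.-1) (x ^+ n).
  have -> : x ^+ n = - \sum_(1 <= i < n.+1) c i * x ^+ (n - i).
    by apply/eqP; rewrite -addr_eq0 eq.
  apply: idealN => //; rewrite big_nat_cond; apply: ideal_sum => // i /andP [/andP [h1 h2] _].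
  have := hc i; rewrite h1 -ltnS h2 => /(_ isT).
  case: i h1 h2 => // i _ h2 hci.
  apply: (iprod_least (ideal_preim_mulr (x ^+ (n - i.+1)) hT) _ hci) => k v hk hv /=.
  rewrite -mulrA; apply: iprod_mem => //.
  have -> : n.-1 = (i + (n - i.+1))%N by rewrite ltnS in h2; lia.
  apply: (ipowD i (n - i.+1) hL).2; apply: iprod_mem.
    exact: (ipowS hL (@sub_adjoin K x)).
  by apply: ipow_exp; apply: adjoin_id.
move=> y /ipow_adjoin_sub [u [s [hu ->]]].
by apply: idealD => //; apply: ideal_mull => //; rewrite prednK.
Qed.

End AdjoinIntegral.

Lemma weak_reduction_adjoin_int_closure K I x : is_ideal K -> psubset I K ->
  int_closure I x -> weak_reduction K (adjoin K x).
Proof.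
move=> hK sIK [n [c [n0 [hc eq]]]]; apply: (weak_reduction_adjoin hK n0 _ eq).
by move=> i /hc; apply: ipowS.
Qed.

Fixpoint adjoin_seq I (s : seq R) (t : nat) : R -> Prop :=
  if t is t'.+1 then adjoin (adjoin_seq I s t') s`_t' else I.

Lemma adjoin_seq_ideal I s t : is_ideal I -> is_ideal (adjoin_seq I s t).
Proof. by move=> hI; elim: t => [|t IH] //=; apply: adjoin_ideal. Qed.

Lemma adjoin_seqS I s t t' : (t <= t')%N -> psubset (adjoin_seq I s t) (adjoin_seq I s t').
Proof.
elim: t' => [|t' IH]; first by rewrite leqn0 => /eqP ->.
rewrite leq_eqVlt => /orP [/eqP ->|] //.
by rewrite ltnS => /IH h y /h; apply: sub_adjoin.
Qed.

Lemma adjoin_seq_nth I s t i : is_ideal I -> (i < t)%N -> adjoin_seq I s t s`_i.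
Proof. by move=> hI hit; apply: (adjoin_seqS hit) => /=; apply/adjoin_id/adjoin_seq_ideal. Qed.

Lemma weak_reduction_adjoin_seq I s t : is_ideal I ->
  (forall i, (i < size s)%N -> int_closure I s`_i) -> weak_reduction I (adjoin_seq I s t).
Proof.
move=> hI hs; elim: t => [|t IH] /=; first by exists 0%N.
have hKt := adjoin_seq_ideal s t hI.
apply: weak_reduction_trans IH _ => //; [exact: adjoin_ideal | exact: sub_adjoin |].
case: (ltnP t (size s)) => ht.
  by apply: weak_reduction_adjoin_int_closure (hs _ ht) => //; apply: (@adjoin_seqS _ _ 0%N).
exists 0%N => y; rewrite nth_default //=.
apply: iprodS => // z [k [r [hk ->]]]; by rewrite mulr0 addr0.
Qed.

(* Since J is finitely generated and integral over I, I is a reduction of J. *)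
Lemma int_closure_ipow_sub I J s : is_ideal I -> is_ideal J -> peq J (gen s) ->
  psubset J (int_closure I) -> exists c, forall n, psubset (ipow J (c + n)) (ipow I n).
Proof.
move=> hI hJ eJ sJ.
have hs i : (i < size s)%N -> int_closure I s`_i by move=> hi; apply/sJ/eJ/gen_nth.
have hK := adjoin_seq_ideal s (size s) hI.
have [c hc] := weak_reduction_ipow_sub hI hK (weak_reduction_adjoin_seq (size s) hI hs).
exists c => n y hy; apply: hc; apply: (ipowS hK _ hy) => z /eJ.
by apply: gen_sub => // i; apply: adjoin_seq_nth.
Qed.

End Reductions.

Lemma int_linear_bounded (d k : int) (N : nat) :
  (forall n : nat, (N <= n)%N -> d * (n.+1)%:Z <= k) -> d <= 0.
Proof.
move=> h; have := h (N + `|k|)%N (leq_addr _ _).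
case: (lerP d 0) => // hd H.
have hk : k <= (`|k|%N)%:Z by rewrite abszE ler_norm.
have : (`|k|%N)%:Z < (N + `|k|).+1%:Z by rewrite ltz_nat ltnS leq_addl.
nia.
Qed.

Section FirstCoefficient.
Variable R : comNzRingType.
Implicit Types I J : R -> Prop.

Lemma colength_leq I J l l' : is_ideal I -> is_ideal J -> psubset I J ->
  colength_is I l -> colength_is J l' -> (l' <= l)%N.
Proof.
move=> hI hJ sIJ hl hl'.
have [l1 [l2 [_ h2 <-]]] := qlength_split hI hJ (unitideal_ideal R) sIJ (fun _ _ => Logic.I) hl.
by rewrite (qlength_unique hl' h2) leq_addl.
Qed.

(* Comparing colengths of I^(n+1) and J^(n+1), then of J^(c+n+1) and
   I^(n+1), first forces e_0(I) = e_0(J) and then e_1(I) <= e_1(J). *)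
Lemma e1_le_of_ipow_sub I J (c : nat) (e1I e1J : int) : is_ideal I -> is_ideal J ->
  psubset I J -> (forall n, psubset (ipow J (c + n)) (ipow I n)) ->
  e1_is I e1I -> e1_is J e1J -> e1I <= e1J.
Proof.
move=> hI hJ sIJ hc [e0I [N1 hlI]] [e0J [N2 hlJ]].
have lenI n : (N1 + N2 <= n)%N ->
    exists l, colength_is (ipow I n.+1) l /\ l%:Z = e0I * (n.+1)%:Z - e1I.
  by move=> hn; apply: hlI; apply: leq_trans hn; apply: leq_addr.
have lenJ n : (N1 + N2 <= n)%N ->
    exists l, colength_is (ipow J n.+1) l /\ l%:Z = e0J * (n.+1)%:Z - e1J.
  by move=> hn; apply: hlJ; apply: leq_trans hn; apply: leq_addl.
have JI n : (N1 + N2 <= n)%N -> e0J * (n.+1)%:Z - e1J <= e0I * (n.+1)%:Z - e1I.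
  move=> hn; have [lI [hlI' <-]] := lenI n hn; have [lJ [hlJ' <-]] := lenJ n hn.
  rewrite lez_nat; apply: (colength_leq (ipow_ideal n.+1 hI) (ipow_ideal n.+1 hJ) _ hlI' hlJ').
  exact: ipowS.
have IJ n : (N1 + N2 <= n)%N -> e0I * (n.+1)%:Z - e1I <= e0J * ((c + n)%N.+1)%:Z - e1J.
  move=> hn; have [lI [hlI' <-]] := lenI n hn.
  have [lJ [hlJ' <-]] := lenJ (c + n)%N (leq_trans hn (leq_addl _ _)).
  rewrite lez_nat.
  apply: (colength_leq (ipow_ideal (c + n).+1 hJ) (ipow_ideal n.+1 hI) _ hlJ' hlI').
  by rewrite -addnS; apply: hc.
have d1 : e0J - e0I <= 0.
  by apply: (int_linear_bounded (k := e1J - e1I) (N := (N1 + N2)%N)) => n /JI; lia.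
have d2 : e0I - e0J <= 0.
  apply: (int_linear_bounded (k := e0J * c%:Z + e1I - e1J) (N := (N1 + N2)%N)) => n /IJ.
  by rewrite -addnS PoszD mulrDr; nia.
have e0E : e0J = e0I by lia.
by have := JI _ (leqnn _); rewrite e0E; lia.
Qed.

End FirstCoefficient.

Section Regular.
Variable R : comNzRingType.
Implicit Types x a u v : R.

Definition regular x := forall z, x * z = 0 -> z = 0.

Lemma regular_cancel x u v : regular x -> x * u = x * v -> u = v.
Proof. by move=> hx h; apply/eqP; rewrite -subr_eq0; apply/eqP/hx; rewrite mulrBr h subrr. Qed.

Lemma regular_exp x n : regular x -> regular (x ^+ n).
Proof.
move=> hx; elim: n => [|n IH] z; first by rewrite expr0 mul1r.
by rewrite exprS -mulrA => /hx /IH.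
Qed.

Lemma regular_divisor x a r : regular x -> x = r * a -> regular a.
Proof. by move=> hx ex z h; apply: hx; rewrite ex -mulrA h mulr0. Qed.

Lemma regular_neq0 x : regular x -> x != 0.
Proof.
move=> hx; apply/eqP => x0; have := hx 1; rewrite x0 mul0r => /(_ erefl) /eqP.
by rewrite oner_eq0.
Qed.

End Regular.

Section Noetherian.
Variable R : comNzRingType.
Hypothesis hN : noetherian R.

Lemma noetherian_chain_stable (f : nat -> R -> Prop) : (forall n, is_ideal (f n)) ->
  (forall n, psubset (f n) (f n.+1)) -> exists M, psubset (f M.+1) (f M).
Proof.
move=> hf hS.
have mono n n' : (n <= n')%N -> psubset (f n) (f n').
  elim: n' => [|n' IH]; first by rewrite leqn0 => /eqP ->.
  by rewrite leq_eqVlt => /orP [/eqP -> //|]; rewrite ltnS => /IH hs w /hs /hS.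
pose U w := exists n, f n w.
have hU : is_ideal U.
  apply/idealP; split; first by exists 0%N; apply: ideal0.
    move=> w w' [n hw] [n' hw']; exists (maxn n n').
    by apply: idealD; [exact: hf | apply: (mono n) hw; apply: leq_maxl
                                  | apply: (mono n') hw'; apply: leq_maxr].
  by move=> b w [n hw]; exists n; apply: ideal_mull.
have [g eg] := hN hU.
have fin k : (k <= size g)%N -> exists M, forall i, (i < k)%N -> f M g`_i.
  elim: k => [|k IH] hk; first by exists 0%N.
  have [M hM] := IH (ltnW hk).
  have [n hn] : U g`_k by apply/eg/gen_nth.
  exists (maxn M n) => i; rewrite ltnS leq_eqVlt => /orP [/eqP ->|hi].
    by apply: (mono n) hn; apply: leq_maxr.
  by apply: (mono M) (hM _ hi); apply: leq_maxl.
have [M hM] := fin _ (leqnn _).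
by exists M => w hw; apply: (gen_sub (hf M) hM); apply/eg; exists M.+1.
Qed.

End Noetherian.

Section Local.
Variables (R : comNzRingType) (m : R -> Prop).
Hypothesis hloc : local_with m.

Lemma local_ideal : is_ideal m. Proof. by case: hloc. Qed.

Lemma local_not1 : ~ m 1. Proof. by case: hloc => _ []. Qed.

Lemma local_unit w : ~ m w -> exists w', w * w' = 1.
Proof.
move=> hw; case: (classic (principal w 1)) => [[r e]|h]; first by exists r; rewrite mulrC e.
case: hloc => _ [_ hmax]; exfalso; apply/hw/(hmax _ (principal_ideal w) h).
exact: principal_id.
Qed.

Lemma local_unit_one_sub c : m c -> exists w, (1 - c) * w = 1.
Proof.
move=> hc; apply: local_unit => h; apply: local_not1.
by rewrite -(subrK c 1); apply: idealD => //; exact: local_ideal.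
Qed.

End Local.

Section PrincipalMaximal.
Variables (R : comNzRingType) (m : R -> Prop) (y x : R).
Hypotheses (hN : noetherian R) (hloc : local_with m).
Hypotheses (hmy : peq m (principal y)) (hmx : m x) (hx : regular x).

Let y_regular : regular y.
Proof. by have [r er] := (hmy x).1 hmx; apply: regular_divisor hx er. Qed.

(* Krull's intersection theorem for the principal maximal ideal *)
Lemma principal_max_pow_inter (z : R) : (forall n, exists w, z = w * y ^+ n) -> z = 0.
Proof.
move=> h.
pose zs n := proj1_sig (constructive_indefinite_description _ (h n)).
have ezs n : z = zs n * y ^+ n.
  by rewrite /zs; case: constructive_indefinite_description.
have rel n : zs n = zs n.+1 * y.
  apply: (regular_cancel (regular_exp (n:=n) y_regular)).
  by rewrite mulrC -ezs mulrCA -exprSr -ezs.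
have [|M hM] := noetherian_chain_stable hN (fun n => principal_ideal (zs n)).
  by move=> n w [r ->]; exists (r * y); rewrite (rel n) mulrA mulrAC.
have [c ec] := hM _ (principal_id (zs M.+1)).
have hcy : m (c * y) := ideal_mull c (local_ideal hloc) ((hmy y).2 (principal_id y)).
have [w hw] := local_unit_one_sub hloc hcy.
have h0 : zs M.+1 * (1 - c * y) = 0.
  by rewrite mulrBr mulr1 mulrA (mulrC _ c) -mulrA -rel -ec subrr.
have zs0 : zs M.+1 = 0 by rewrite -[zs _]mulr1 -hw mulrA h0 mul0r.
by rewrite (ezs M.+1) zs0 mul0r.
Qed.

Lemma principal_max_factor (z : R) : z != 0 ->
  exists n u u', z = u * y ^+ n /\ u * u' = 1.
Proof.
move=> hz.
have [n [hPn hmin]] : exists n, (~ exists w, z = w * y ^+ n) /\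
    forall k, (k < n)%N -> ~ ~ exists w, z = w * y ^+ k.
  apply: ex_minn_classic; apply: NNPP => hno; move/eqP: hz; apply.
  by apply: principal_max_pow_inter => n; apply: NNPP => h; apply: hno; exists n.
case: n hPn hmin => [|n] hPn hmin.
  by exfalso; apply: hPn; exists z; rewrite expr0 mulr1.
have [u eu] := NNPP _ (hmin n (ltnSn n)).
have hu : ~ m u.
  by move=> /hmy [r er]; apply: hPn; exists r; rewrite eu er exprSr mulrA mulrAC.
have [u' hu'] := local_unit hloc hu.
by exists n, u, u'.
Qed.

Let y_pow_dvd (z : R) : z != 0 -> exists k, principal z (y ^+ k) /\ principal (y ^+ k) z.
Proof.
move=> /principal_max_factor [k [u [u' [eu hu]]]]; exists k; split.
  by exists u'; rewrite eu mulrA (mulrC u') hu mul1r.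
by exists u.
Qed.

Lemma principal_max_domain (p q : R) : p * q = 0 -> p = 0 \/ q = 0.
Proof.
move=> hpq; apply: NNPP => hn.
have hp : p != 0 by apply/eqP => e; apply: hn; left.
have hq : q != 0 by apply/eqP => e; apply: hn; right.
have [n [[u eu] _]] := y_pow_dvd hp; have [k [[v ev] _]] := y_pow_dvd hq.
have /eqP := regular_neq0 (regular_exp (n:=n + k) y_regular); apply.
by rewrite exprD eu ev mulrACA hpq mulr0.
Qed.

Lemma principal_max_pid (I : R -> Prop) : is_ideal I -> exists a, peq I (principal a).
Proof.
move=> hI; case: (classic (exists w, I w /\ w != 0)) => [[w [hw hw0]]|hno]; last first.
  exists 0 => z; split; last by move=> [r ->]; rewrite mulr0; apply: ideal0.
  move=> hz; exists 0; rewrite mul0r; apply: NNPP => hz0; apply: hno; exists z.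
  by split => //; apply/eqP.
have [n0 [hn0 hmin]] : exists n, I (y ^+ n) /\ forall k, (k < n)%N -> ~ I (y ^+ k).
  apply: ex_minn_classic; have [n [[u eu] _]] := y_pow_dvd hw0.
  by exists n; rewrite eu; apply: ideal_mull.
exists (y ^+ n0) => z; split; last by move=> [r ->]; apply: ideal_mull.
move=> hz; case: (eqVneq z 0) => [->|hz0]; first by exists 0; rewrite mul0r.
have [k [[u' eu'] [u ->]]] := y_pow_dvd hz0.
have hnk : (n0 <= k)%N.
  by rewrite leqNgt; apply/negP => /hmin; apply; rewrite eu'; apply: ideal_mull.
by exists (u * y ^+ (k - n0)); rewrite -mulrA -exprD subnK.
Qed.

Lemma principal_max_dvr : is_dvr R.
Proof.
split; [exact: principal_max_domain | split; first exact: principal_max_pid].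
exists y; split; first exact: regular_neq0.
move=> [w hw]; apply: (local_not1 hloc); rewrite -hw.
by apply: ideal_mulr; [exact: local_ideal hloc | apply/hmy/principal_id].
Qed.

End PrincipalMaximal.

Section MulsetLength.
Variables (R : comNzRingType) (c : R).
Hypothesis hc : regular c.

Lemma qlength_mulset (A B : R -> Prop) l : is_ideal A -> is_ideal B -> psubset A B ->
  qlength_is (V := R^o) A B l <-> qlength_is (V := R^o) (mulset c A) (mulset c B) l.
Proof.
move=> hA hB sAB.
have sAB' : psubset (mulset c A) (mulset c B).
  by move=> w [z [hz ->]]; exists z; split => //; apply: sAB.
apply: (@qlength_transport _ R^o R^o (fun u => c * u)) => //.
- by move=> u v; rewrite mulrDr.
- by move=> b u; rewrite /GRing.scale /= mulrCA.
- by move=> u v _ _; apply: regular_cancel.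
- by move=> w [z [hz ->]]; exists z.
- by move=> u hu; exists u.
- by move=> u hu; split=> [hA'|[z [hz /(regular_cancel hc) ->]]]; first by exists u.
Qed.

End MulsetLength.

Section ColonIdeal.
Variables (R : comNzRingType) (m : R -> Prop) (a : R).
Hypotheses (hloc : local_with m) (ham : m a) (ha : regular a).
Hypothesis m_nonprincipal : forall y, ~ peq m (principal y).
Let K := colon (principal a) m.
Let hK : is_ideal K := colon_ideal m (principal_ideal a).
Let hm : is_ideal m := local_ideal hloc.

Lemma colon_sub_max : psubset K m.
Proof.
case: (classic (K 1)) => [h1|h1]; last by case: hloc => _ [_]; apply.
exfalso; apply: (m_nonprincipal (y := a)) => z; split; first by move=> /h1; rewrite mul1r.
by move=> [r ->]; exact (ideal_mull r hm ham).
Qed.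

(* If some w z = r a with w in K, z in m had r a unit, m would be generated by z / r. *)
Lemma colon_mul_max w z : K w -> m z -> exists t, m t /\ w * z = a * t.
Proof.
move=> hw hz; have [r er] := hw z hz.
case: (classic (m r)) => hr; first by exists r; rewrite er mulrC.
have [r' hr'] := local_unit hloc hr.
exfalso; apply: (m_nonprincipal (y := z * r')) => q; split; last first.
  by move=> [b ->]; exact (ideal_mull b hm (ideal_mulr r' hm hz)).
move=> hq; have [s es] := hw q hq; exists s; apply: (regular_cancel ha).
have ea : a = w * (z * r') by rewrite mulrA er mulrAC hr' mul1r.
by rewrite {1}ea -mulrA mulrCA es; ring.
Qed.

Lemma colon_mul u v : K u -> K v -> exists t, K t /\ u * v = a * t.
Proof.
move=> hu hv; have [t et] := hu v (colon_sub_max hv).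
exists t; split; last by rewrite et mulrC.
move=> z hz; have [w [hw ew]] := colon_mul_max hv hz.
have [s es] := hu w hw; exists s; apply: (regular_cancel ha).
by rewrite mulrA -[a * t]mulrC -et -mulrA ew mulrCA es mulrC.
Qed.

Lemma ipow_colon n : peq (ipow K n.+1) (mulset (a ^+ n) K).
Proof.
elim: n => [|n IH] w.
  split; first by move=> /(iprod_subl hK) hw; exists w; rewrite expr0 mul1r.
  by move=> [z [hz ->]]; rewrite expr0 mul1r; apply: iprod1r.
split.
  move=> /(iprodSr hK (fun v => (IH v).1)).
  apply: iprod_least; first exact: mulset_ideal.
  move=> i v hi [z [hz ->]]; have [t [ht et]] := colon_mul hi hz.
  by exists t; split => //; rewrite mulrCA et mulrA -exprSr.
move=> [z [hz ->]]; rewrite exprS -mulrA.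
apply: (iprodSr hK (fun v => (IH v).2)); apply: iprod_mem.
  by apply: sub_colon; [exact: principal_ideal | exact: principal_id].
by exists z.
Qed.

Let hU := unitideal_ideal R.

Lemma principal_pow_mulset n : peq (principal (a ^+ n)) (mulset (a ^+ n) (@unitideal R)).
Proof. by move=> w; split => [[r ->]|[r [_ ->]]]; exists r; rewrite mulrC. Qed.

Lemma colength_principal_pow q n : colength_is (principal a) q ->
  colength_is (principal (a ^+ n.+1)) (n.+1 * q).
Proof.
move=> hq; elim: n => [|n IH]; first by rewrite mul1n expr1.
have sub : psubset (principal (a ^+ n.+2)) (principal (a ^+ n.+1)).
  by move=> w [r ->]; exists (r * a); rewrite exprS mulrA.
rewrite mulSn.
apply: (qlength_cat (principal_ideal _) (principal_ideal _) hU sub (fun _ _ => I) _ IH).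
have /(qlength_mulset (regular_exp (n:=n.+1) ha) q (principal_ideal a) hU (fun _ _ => I)) h := hq.
apply: qlength_peq h => w; last by split => /principal_pow_mulset.
split=> [[z [[r ->] ->]]|[r ->]]; first by exists r; rewrite [in RHS]exprSr mulrCA.
by exists (r * a); split; [exists r | rewrite exprSr mulrCA].
Qed.

Lemma colength_ipow_colon q t n : colength_is (principal a) q -> colength_is K t ->
  colength_is (ipow K n.+2) (n.+1 * q + t).
Proof.
move=> hq ht; have hreg := regular_exp (n:=n.+1) ha.
have sub : psubset (mulset (a ^+ n.+1) K) (principal (a ^+ n.+1)).
  by move=> w [z [_ ->]]; exists z; rewrite mulrC.
have /(qlength_mulset hreg t hK hU (fun _ _ => I)) ht' := ht.
have ht'' : qlength_is (V := R^o) (mulset (a ^+ n.+1) K) (principal (a ^+ n.+1)) t.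
  by apply: qlength_peq ht' => // w; split => /principal_pow_mulset.
have := qlength_cat (mulset_ideal _ hK) (principal_ideal _) hU sub (fun _ _ => I) ht''
  (colength_principal_pow n hq).
by rewrite addnC; apply: qlength_peq => // w; rewrite ipow_colon.
Qed.

Lemma colength_colon_split n l : colength_is (ipow K n.+2) l ->
  exists q t s, [/\ colength_is (principal a) q, colength_is K t,
                    qlength_is (V := R^o) (principal a) K s & q = (s + t)%N].
Proof.
move=> hl; have {}hl := qlength_peq (V := R^o) (ipow_colon n.+1) (fun w => iff_refl _) hl.
have hK' := mulset_ideal (a ^+ n.+1) hK.
have subQ : psubset (mulset (a ^+ n.+1) K) (principal a).
  by move=> w [z [_ ->]]; exists (a ^+ n * z); rewrite exprSr mulrAC.
have subK : psubset (mulset (a ^+ n.+1) K) K by move=> w [z [hz ->]]; exact: ideal_mull hK hz.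
have [_ [q [_ hq _]]] := qlength_split hK' (principal_ideal a) hU subQ (fun _ _ => I) hl.
have [_ [t [_ ht _]]] := qlength_split hK' hK hU subK (fun _ _ => I) hl.
have subQK : psubset (principal a) K by apply: sub_colon; exact: principal_ideal.
have [s [t' [hs ht' est]]] := qlength_split (principal_ideal a) hK hU subQK (fun _ _ => I) hq.
by exists q, t, s; split => //; rewrite -est (qlength_unique ht' ht).
Qed.

(* The colengths of K^(n+1) grow like n l(R/(a)) + l(R/K), so
   e_1(K) = l(R/(a)) - l(R/K) = l(K/(a)). *)
Lemma e1_colon e : e1_is K e -> exists s, qlength_is (V := R^o) (principal a) K s /\ e = s%:Z.
Proof.
move=> [e0 [N h]].
have [l1 [hl1 el1]] := h N.+1 (leqnSn N).
have [l2 [hl2 el2]] := h N.+2 (leqW (leqnSn N)).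
have [q [t [s [hq ht hs eq]]]] := colength_colon_split hl1.
rewrite (qlength_unique hl1 (colength_ipow_colon N hq ht)) in el1.
rewrite (qlength_unique hl2 (colength_ipow_colon N.+1 hq ht)) in el2.
exists s; split => //.
have e0E : e0 = (s + t)%N%:Z by subst q; lia.
by move: el1; rewrite e0E eq; lia.
Qed.

End ColonIdeal.

Section Ext1.
Variables (R : comNzRingType) (xs : seq R) (a : R).
Hypothesis ha : regular a.
Let k := size xs.
Let Z := ext1_cycles (xs := xs).
Let B := ext1_bounds (xs := xs).
Let K := colon (principal a) (gen xs).

Lemma ext1_cycles_submod : submod Z.
Proof.
split.
- by move=> c _; apply: big1 => i _; rewrite mxE mulr0.
- move=> y y' hy hy' c hc.
  rewrite (eq_bigr (fun i => c 0 i * y 0 i + c 0 i * y' 0 i)) => [|i _]; last by rewrite mxE mulrDr.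
  by rewrite big_split /= hy // hy' // addr0.
- move=> b y hy c hc.
  rewrite (eq_bigr (fun i => b * (c 0 i * y 0 i))) => [|i _]; last by rewrite mxE mulrCA.
  by rewrite -mulr_sumr hy // mulr0.
Qed.

Lemma ext1_bounds_cycles : psubset B Z.
Proof.
move=> y [r hr] c hc; rewrite (eq_bigr (fun i => r * (c 0 i * xs`_i))) => [|i _].
  by rewrite -mulr_sumr hc mulr0.
by rewrite hr mulrCA.
Qed.

Let sum_delta (i : 'I_k) (F : 'I_k -> R) : \sum_l ((l == i)%:R * F l) = F i.
Proof. by rewrite (bigD1 i) //= eqxx mul1r big1 ?addr0 // => l /negbTE ->; rewrite mul0r. Qed.

(* test y against the Koszul syzygy x_j e_i - x_i e_j *)
Lemma ext1_cycles_koszul y : Z y -> forall i j : 'I_k, y 0 i * xs`_j = y 0 j * xs`_i.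
Proof.
move=> hy i j.
pose c : 'rV[R]_k := \row_l ((l == i)%:R * xs`_j - (l == j)%:R * xs`_i).
have expand (F : 'I_k -> R) : \sum_(l < k) c 0 l * F l = xs`_j * F i - xs`_i * F j.
  rewrite (eq_bigr (fun l => (l == i)%:R * (xs`_j * F l) - (l == j)%:R * (xs`_i * F l))).
    by rewrite sumrB (sum_delta i (fun l => xs`_j * F l)) (sum_delta j (fun l => xs`_i * F l)).
  by move=> l _; rewrite mxE mulrBl !mulrA.
have hc : \sum_(l < k) c 0 l * xs`_l = 0 by rewrite (expand (fun l => xs`_l)) mulrC subrr.
have /eqP := hy c hc.
by rewrite expand subr_eq0 => /eqP; rewrite mulrC (mulrC xs`_i).
Qed.

Section Map.
Variable r : 'I_k -> R.
Hypothesis har : a = \sum_(i < k) r i * xs`_i.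

(* For a cycle y, the element f y = sum r_i y_i satisfies f y x_j = a y_j; this
   realises Ext^1(R/m, R) = Hom(R/m, R/(a)) = ((a) : m)/(a). *)
Definition ext1_map (y : 'rV[R]_k) : R := \sum_(i < k) r i * y 0 i.

Lemma ext1_map_mul y : Z y -> forall j : 'I_k, ext1_map y * xs`_j = a * y 0 j.
Proof.
move=> hy j; rewrite /ext1_map mulr_suml har mulr_suml; apply: eq_bigr => i _.
by rewrite -mulrA (ext1_cycles_koszul hy i j) mulrA mulrAC.
Qed.

Lemma ext1_map_colon y : Z y -> K (ext1_map y).
Proof.
move=> hy v [d ->]; exists (\sum_(j < k) d j * y 0 j).
rewrite mulr_sumr mulr_suml; apply: eq_bigr => j _.
by rewrite mulrCA ext1_map_mul // mulrCA mulrC.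
Qed.

Lemma ext1_map_onto w : K w -> exists y, Z y /\ ext1_map y = w.
Proof.
move=> hw.
have h (j : 'I_k) : exists q, w * xs`_j = q * a by apply/hw/gen_nth.
pose yv j := proj1_sig (constructive_indefinite_description _ (h j)).
have hyv (j : 'I_k) : w * xs`_j = yv j * a.
  by rewrite /yv; case: constructive_indefinite_description.
exists (\row_j yv j); split.
  move=> c hc; apply: ha; rewrite mulr_sumr.
  rewrite (eq_bigr (fun j => w * (c 0 j * xs`_j))); first by rewrite -mulr_sumr hc mulr0.
  by move=> j _; rewrite mxE [w * _]mulrCA hyv; ring.
apply: (regular_cancel ha); rewrite /ext1_map mulr_sumr [RHS]mulrC [in RHS]har mulr_sumr.
by apply: eq_bigr => j _; rewrite mxE [w * _]mulrCA hyv; ring.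
Qed.

Lemma ext1_map_bounds y : Z y -> B y <-> principal a (ext1_map y).
Proof.
move=> hy; split=> [[q hq]|[q hq]].
  by exists q; rewrite /ext1_map har mulr_sumr; apply: eq_bigr => i _; rewrite hq mulrCA.
exists q => j; apply: (regular_cancel ha).
by rewrite -ext1_map_mul // hq mulrAC mulrC mulrA.
Qed.

End Map.

Lemma cm_type_colon s : gen xs a -> qlength_is (V := R^o) (principal a) K s -> cm_type_is xs s.
Proof.
move=> [r har] hs.
apply: (proj2 (qlength_transport (W := R^o) (f := ext1_map r) _ _ _ _ _ _ _ _ _ s) hs).
- by move=> y y'; rewrite /ext1_map -big_split; apply: eq_bigr => i _; rewrite mxE mulrDr.
- move=> b y; rewrite /ext1_map /GRing.scale /= mulr_sumr.
  by apply: eq_bigr => i _; rewrite mxE mulrCA.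
- exact: ext1_cycles_submod.
- exact: ext1_bounds_cycles.
- exact: sub_colon (principal_ideal a).
- move=> y y' hy hy' e; apply/rowP => j; apply: (regular_cancel ha).
  by rewrite -!(ext1_map_mul har) // e.
- exact: ext1_map_onto.
- exact: ext1_map_colon.
- exact: ext1_map_bounds.
Qed.

End Ext1.

Lemma cm_dim1_regular (R : comNzRingType) (m : R -> Prop) :
  krull_dim_is R 1 -> cohen_macaulay m -> exists x, m x /\ regular x.
Proof.
move=> [[f1 hf1] b1] [d [[[f hf] b] [[s [hs hreg]] _]]].
have d1 : d = 1%N by apply/eqP; rewrite eqn_leq (b1 _ _ hf) (b _ _ hf1).
move: hs hreg; rewrite d1; case: s => [|x [|? ?]] //= _ [hm hr _].
exists x; split; first by apply: hm; rewrite inE.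
by move=> z hz; apply/gen_nil/(hr 0%N isT z)/gen_nil.
Qed.

Theorem corollary2p5 (R : comNzRingType) (m : R -> Prop) :
  noetherian R -> local_with m -> krull_dim_is R 1 -> cohen_macaulay m ->
  (* (1) *)
  (forall (I J : R -> Prop) (a : R),
      m_primary m I -> m_primary m J -> I a -> reduction (principal a) I ->
      psubset I J -> psubset J (int_closure I) ->
      forall e1I e1J : int, e1_is I e1I -> e1_is J e1J -> e1I <= e1J) /\
  (* (2) *)
  (~ is_dvr R ->
   forall a : R, m a -> m_primary m (principal a) ->
   forall xs : seq R, peq m (gen xs) ->
   forall e : int, e1_is (colon (principal a) m) e ->
   exists t : nat, cm_type_is xs t /\ e = t%:Z).
Proof.
move=> hN hloc hdim hCM; split.
  move=> I J _ [[hI _] _] [[hJ _] _] _ _ sIJ sJI e1I e1J.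
  have [s es] := hN J hJ.
  have [c hc] := int_closure_ipow_sub hI hJ es sJI.
  exact: e1_le_of_ipow_sub hI hJ sIJ hc.
move=> not_dvr a ham [_ hrad] xs hmg e he.
have [x [hx hx_reg]] := cm_dim1_regular hdim hCM.
have [n [r er]] := (hrad x).2 hx.
have ha_reg : regular a := regular_divisor (regular_exp hx_reg) er.
have m_nonprincipal y : ~ peq m (principal y).
  by move=> hy; apply/not_dvr/(principal_max_dvr hN hloc hy hx hx_reg).
have [s [hs ->]] := e1_colon hloc ham ha_reg m_nonprincipal he.
exists s; split => //; apply: (cm_type_colon (xs := xs) ha_reg) => //; first exact/hmg.
by apply: qlength_peq hs => // w; split=> hw y /hmg hy; apply: hw.
Qed.
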